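(* Let $L=\langle S,A,\to\rangle$ be a labelled transition system and $x,y\in\{o,b\}$. Then $\mathrel{\underline{\leftrightarrow}}^{ed}_{(x,y)}$ has the stuttering property: whenever $t_0\xrightarrow{\tau}t_1\xrightarrow{\tau}\cdots\xrightarrow{\tau}t_k$ with $t_0\mathrel{\underline{\leftrightarrow}}^{ed}_{(x,y)}t_k$, then $t_i\mathrel{\underline{\leftrightarrow}}^{ed}_{(x,y)}t_j$ for all $0\le i,j\le k$.
   Context: An LTS is $\langle S,A,\to\rangle$ with states $S$, actions $A$ containing the internal action $\tau$, and $\to\subseteq S\times A\times S$; write $s\xrightarrow{a}t$, $\twoheadrightarrow$ for the reflexive-transitive and $\twoheadrightarrow^+$ for the transitive closure of $\xrightarrow{\tau}$. For $R\subseteq S\times S$ and $s,s',t$: $s\twoheadrightarrow_{o,R,t}s'$ iff $s\twoheadrightarrow s'$; $s\twoheadrightarrow_{b,R,t}s'$ iff $s\twoheadrightarrow s'$, $t\,R\,s$ and $t\,R\,s'$. For $x,y\in\{o,b\}$, a symmetric $R$ is an $(x,y)$-generic bisimulation if whenever $s\,R\,t$ and $s\xrightarrow{a}s'$, either $a=\tau$ and $s'\,R\,t$, or there exist $t',t_1,t_2$ with $t\twoheadrightarrow_{x,R,s}t_1\xrightarrow{a}t_2\twoheadrightarrow_{y,R,s'}t'$ and $s'\,R\,t'$. $R$ is an $(x,y)$-generic bisimulation with explicit divergence if it is an $(x,y)$-generic bisimulation and for all $s\,R\,t$, if there is an infinite sequence $s=s_0\xrightarrow{\tau}s_1\xrightarrow{\tau}s_2\cdots$,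 then there exist $t'$ with $t\twoheadrightarrow^+t'$ and some $k$ with $s_k\,R\,t'$. $s\mathrel{\underline{\leftrightarrow}}^{ed}_{(x,y)}t$ iff some such relation relates $s$ and $t$. *)

From Stdlib Require Import Relations.

Record LTS := {
  St : Type;
  Act : Type;
  tau : Act;
  step : St -> Act -> St -> Prop
}.

Inductive mode := mo | mb.

Section Defs.
Variable L : LTS.

Definition tau_step (s t : St L) : Prop := step L s (tau L) t.

Definition taus : relation (St L) := clos_refl_trans (St L) tau_step.
Definition taus_plus : relation (St L) := clos_trans (St L) tau_step.

(* gen_reach m R t s s'  is  s ->>_{m,R,t} s' *)
Definition gen_reach (m : mode) (R : relation (St L)) (t s s' : St L) : Prop :=
  match m with
  | mo => taus s s'
  | mb => taus s s' /\ R t s /\ R t s'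
  end.

Definition gen_bisim (x y : mode) (R : relation (St L)) : Prop :=
  (forall s t, R s t -> R t s) /\
  (forall s t a s', R s t -> step L s a s' ->
     (a = tau L /\ R s' t) \/
     exists t' t1 t2,
       gen_reach x R s t t1 /\ step L t1 a t2 /\ gen_reach y R s' t2 t' /\ R s' t').

Definition gen_bisim_ed (x y : mode) (R : relation (St L)) : Prop :=
  gen_bisim x y R /\
  (forall s t, R s t ->
     forall f : nat -> St L, f 0 = s -> (forall n, tau_step (f n) (f (S n))) ->
     exists t' k, taus_plus t t' /\ R (f k) t').

Definition bisim_ed (x y : mode) (s t : St L) : Prop :=
  exists R, gen_bisim_ed x y R /\ R s t.

End Defs.

From Stdlib Require Import Arith Relations Lia.

(* As in Basten's proof that branching bisimilarity is an equivalence, we pass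
   to the semi-branching transfer condition, in which a tau-step s -tau-> s' may
   be answered by t ->> t1 ->> t' (with the x/y side conditions) rather than
   only by idling with s' R t.  Unlike the original condition, it lets a pair
   (s, t) inherit the answers of (s, t0) whenever t ->> t0.  Hence stuttering
   holds for the largest semi-branching relation S with explicit divergence: if
   u S a, u S c and a ->> b ->> c, adding the pairs (u, b) and (b, u) to S
   preserves both transfer conditions, since the moves of b are answered from
   the state u reaches while matching a ->> b, and those of u are answered from
   c after b ->> c.  By stuttering, a nonempty tau-answer t ->> t' in S splits
   into reaches and one tau-step with all required side conditions, so S also
   satisfies the original (x,y) condition and is the (x,y)-bisimilarity. *)

Lemma clos_refl_trans_chain (A : Type) (r : relation A) (f : nat -> A) (k : nat) :
  (forall i, i < k -> r (f i) (f (S i))) ->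
  forall i j, i <= j -> j <= k -> clos_refl_trans A r (f i) (f j).
Proof.
  intros Hr i j Hij Hjk. induction Hij as [|j Hij IH].
  - apply rt_refl.
  - apply rt_trans with (f j); [apply IH; lia | apply rt_step, Hr; lia].
Qed.

Section SemiBranching.
Variable L : LTS.
Variables x y : mode.

Definition opt_step (t : St L) (a : Act L) (t' : St L) : Prop :=
  step L t a t' \/ (a = tau L /\ t = t').

Definition semi_transfer (R : relation (St L)) (s t : St L) : Prop :=
  forall a s', step L s a s' ->
    exists t1 t2 t', gen_reach L x R s t t1 /\ opt_step t1 a t2 /\
                     gen_reach L y R s' t2 t' /\ R s' t'.

Definition div_transfer (R : relation (St L)) (s t : St L) : Prop :=
  forall f : nat -> St L, f 0 = s -> (forall n, tau_step L (f n) (f (S n))) ->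
    exists t' k, taus_plus L t t' /\ R (f k) t'.

Definition semi_bisim_ed (R : relation (St L)) : Prop :=
  (forall s t, R s t -> R t s) /\
  (forall s t, R s t -> semi_transfer R s t /\ div_transfer R s t).

Definition semi_bisimilar (s t : St L) : Prop :=
  exists R, semi_bisim_ed R /\ R s t.

Lemma opt_step_tau_taus t t' : opt_step t (tau L) t' -> taus L t t'.
Proof. intros [H | [_ <-]]; [apply rt_step, H | apply rt_refl]. Qed.

Lemma gen_reach_taus m R u s s' : gen_reach L m R u s s' -> taus L s s'.
Proof. destruct m; simpl; tauto. Qed.

Lemma gen_reach_refl m (R : relation (St L)) u s : R u s -> gen_reach L m R u s s.
Proof. destruct m; simpl; intros; repeat split; auto; apply rt_refl. Qed.

Lemma gen_reach_mono m (R R' : relation (St L)) u s s' :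
  (forall p q, R p q -> R' p q) -> gen_reach L m R u s s' -> gen_reach L m R' u s s'.
Proof. destruct m; simpl; firstorder. Qed.

Lemma gen_reach_prefix m (R : relation (St L)) u s0 s s' :
  taus L s0 s -> R u s0 -> gen_reach L m R u s s' -> gen_reach L m R u s0 s'.
Proof.
  destruct m; simpl; intros H0 Hu0.
  - intros H; apply rt_trans with s; assumption.
  - intros (H & _ & Hu'); repeat split; [apply rt_trans with s | |]; assumption.
Qed.

Lemma semi_transfer_mono (R R' : relation (St L)) s t :
  (forall p q, R p q -> R' p q) -> semi_transfer R s t -> semi_transfer R' s t.
Proof.
  intros Hsub H a s' Hs. destruct (H a s' Hs) as (t1 & t2 & t' & H1 & H12 & H2 & H').
  exists t1, t2, t'; split; [|split; [|split]]; auto; eapply gen_reach_mono; eauto.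
Qed.

Lemma semi_transfer_prefix R s t0 t :
  taus L t0 t -> R s t0 -> semi_transfer R s t -> semi_transfer R s t0.
Proof.
  intros Ht Hs0 H a s' Hs. destruct (H a s' Hs) as (t1 & t2 & t' & H1 & H12 & H2 & H').
  exists t1, t2, t'; split; [eapply gen_reach_prefix|]; eauto.
Qed.

Lemma div_transfer_mono (R R' : relation (St L)) s t :
  (forall p q, R p q -> R' p q) -> div_transfer R s t -> div_transfer R' s t.
Proof.
  intros Hsub H f Hf0 Hf. destruct (H f Hf0 Hf) as (t' & k & Ht & Hk).
  exists t', k; auto.
Qed.

Lemma div_transfer_prefix R s t0 t :
  taus L t0 t -> div_transfer R s t -> div_transfer R s t0.
Proof.
  intros Ht H f Hf0 Hf. destruct (H f Hf0 Hf) as (t' & k & Ht' & Hk).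
  exists t', k; split; [apply clos_rt_t with t|]; assumption.
Qed.

Lemma semi_bisimilar_sym s t : semi_bisimilar s t -> semi_bisimilar t s.
Proof. intros (R & [Hsym HR] & H). exists R; split; [split|]; auto. Qed.

Lemma semi_bisimilar_transfer s t :
  semi_bisimilar s t -> semi_transfer semi_bisimilar s t /\ div_transfer semi_bisimilar s t.
Proof.
  intros (R & HR & H).
  assert (Hsub : forall p q, R p q -> semi_bisimilar p q) by (intros p q; exists R; auto).
  destruct (proj2 HR s t H) as [Htr Hdiv].
  split; [eapply semi_transfer_mono | eapply div_transfer_mono]; eauto.
Qed.

Lemma semi_bisimilar_taus s s1 t :
  taus L s s1 -> semi_bisimilar s t -> exists t1, taus L t t1 /\ semi_bisimilar s1 t1.
Proof.
  intros Hs. revert t.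
  induction Hs as [s s1 Hs | s | s s2 s1 _ IH1 _ IH2]; intros t H.
  - destruct (proj1 (semi_bisimilar_transfer s t H) (tau L) s1 Hs)
      as (t1 & t2 & t' & H1 & H12 & H2 & H').
    exists t'; split; [|assumption].
    apply rt_trans with t1; [eapply gen_reach_taus; eauto|].
    apply rt_trans with t2; [apply opt_step_tau_taus | eapply gen_reach_taus]; eauto.
  - exists t; split; [apply rt_refl | assumption].
  - destruct (IH1 t H) as (t2 & Ht2 & H2). destruct (IH2 t2 H2) as (t1 & Ht1 & H1).
    exists t1; split; [apply rt_trans with t2|]; assumption.
Qed.

Lemma semi_bisimilar_lift (R' : relation (St L)) s t0 t :
  (forall p q, semi_bisimilar p q -> R' p q) ->
  R' s t0 -> taus L t0 t -> semi_bisimilar s t ->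
  semi_transfer R' s t0 /\ div_transfer R' s t0.
Proof.
  intros Hsub Hs0 Ht H. destruct (semi_bisimilar_transfer s t H) as [Htr Hdiv].
  split.
  - eapply semi_transfer_prefix, semi_transfer_mono; eauto.
  - eapply div_transfer_prefix, div_transfer_mono; eauto.
Qed.

Lemma semi_bisimilar_stutter u a b c :
  semi_bisimilar u a -> semi_bisimilar u c -> taus L a b -> taus L b c ->
  semi_bisimilar u b.
Proof.
  intros Hua Huc Hab Hbc.
  pose (between p := taus L a p /\ taus L p c).
  pose (R' p q := semi_bisimilar p q \/ (p = u /\ between q) \/ (between p /\ q = u)).
  assert (Hsub : forall p q, semi_bisimilar p q -> R' p q) by (intros; left; assumption).
  exists R'. split; [split | right; left; repeat split; assumption].
  - intros p q [H | [[-> H] | [H ->]]]; unfold R'; auto using semi_bisimilar_sym.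
  - intros p q Hpq. assert (Hpq' := Hpq).
    destruct Hpq' as [H | [[-> [_ Hqc]] | [[Hap _] ->]]].
    + apply semi_bisimilar_lift with q; [assumption | assumption | apply rt_refl | assumption].
    + apply semi_bisimilar_lift with c; assumption.
    + destruct (semi_bisimilar_taus a p u Hap (semi_bisimilar_sym u a Hua)) as (uX & HuX & HpX).
      apply semi_bisimilar_lift with uX; assumption.
Qed.

Lemma gen_reach_split m u s0 s s' :
  gen_reach L m semi_bisimilar u s0 s' -> taus L s0 s -> taus L s s' ->
  gen_reach L m semi_bisimilar u s0 s /\ gen_reach L m semi_bisimilar u s s'.
Proof.
  destruct m; simpl; [tauto|]. intros (_ & H0 & H') H0s Hs'.
  assert (semi_bisimilar u s) by (apply semi_bisimilar_stutter with s0 s'; assumption).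
  repeat split; assumption.
Qed.

Lemma gen_bisim_ed_semi R : gen_bisim_ed L x y R -> semi_bisim_ed R.
Proof.
  intros [[Hsym Htr] Hdiv]. split; [assumption|]. intros s t H. split; [|exact (Hdiv s t H)].
  intros a s' Hs. destruct (Htr s t a s' H Hs) as [[-> Hs't] | (t' & t1 & t2 & H1 & H12 & H2 & H')].
  - exists t, t, t; split; [|split; [|split]]; auto using gen_reach_refl.
    right; split; reflexivity.
  - exists t1, t2, t'; split; [|split; [left|]]; auto.
Qed.

Lemma semi_bisimilar_gen_bisim_ed : gen_bisim_ed L x y semi_bisimilar.
Proof.
  split; [split|].
  - apply semi_bisimilar_sym.
  - intros s t a s' H Hs.
    destruct (proj1 (semi_bisimilar_transfer s t H) a s' Hs)
      as (t1 & t2 & t' & H1 & [H12 | [-> <-]] & H2 & H').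
    { right; exists t', t1, t2; auto. }
    assert (Ht1 := gen_reach_taus _ _ _ _ _ H1).
    assert (Ht' := gen_reach_taus _ _ _ _ _ H2).
    apply clos_rt_rtn1_iff in Ht1.
    destruct Ht1 as [| t0 t1 Hlast Ht0].
    + apply clos_rt_rt1n_iff in Ht'.
      destruct Ht' as [| t2 t' Hfirst Ht2].
      * left; split; [reflexivity | assumption].
      * apply clos_rt_rt1n_iff in Ht2.
        right; exists t', t, t2; split; [|split; [|split]]; auto.
        apply (gen_reach_split y s' t t2 t'); [| apply rt_step |]; assumption.
    + apply clos_rt_rtn1_iff in Ht0.
      right; exists t', t0, t1; split; [|split; [|split]]; auto.
      apply (gen_reach_split x s t t0 t1); [| | apply rt_step]; assumption.
  - intros s t H. exact (proj2 (semi_bisimilar_transfer s t H)).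
Qed.

Lemma bisim_ed_iff_semi_bisimilar s t : bisim_ed L x y s t <-> semi_bisimilar s t.
Proof.
  split.
  - intros (R & HR & H). exists R; split; [apply gen_bisim_ed_semi|]; assumption.
  - intros H. exists semi_bisimilar; split; [apply semi_bisimilar_gen_bisim_ed | assumption].
Qed.

End SemiBranching.

Lemma bisim_ed_refl (L : LTS) (x y : mode) s : bisim_ed L x y s s.
Proof.
  exists eq; split; [|reflexivity]. split; [split|].
  - intros s0 t ->; reflexivity.
  - intros s0 t a s' <- Hs. right; exists s', s0, s'.
    repeat split; auto using gen_reach_refl.
  - intros s0 t <- f Hf0 Hf. exists (f 1), 1; split; [|reflexivity].
    apply t_step; rewrite <- Hf0; apply Hf.
Qed.

Lemma bisim_ed_sym (L : LTS) (x y : mode) s t : bisim_ed L x y s t -> bisim_ed L x y t s.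
Proof. intros (R & HR & H). exists R; split; [|apply (proj1 (proj1 HR))]; assumption. Qed.

Lemma bisim_ed_stutter (L : LTS) (x y : mode) u a b c :
  bisim_ed L x y u a -> bisim_ed L x y u c -> taus L a b -> taus L b c ->
  bisim_ed L x y u b.
Proof.
  rewrite !bisim_ed_iff_semi_bisimilar. apply semi_bisimilar_stutter.
Qed.

Theorem lemma6p3 (L : LTS) (x y : mode) (k : nat) (t : nat -> St L) :
  (forall i, i < k -> tau_step L (t i) (t (S i))) ->
  bisim_ed L x y (t 0) (t k) ->
  forall i j, i <= k -> j <= k -> bisim_ed L x y (t i) (t j).
Proof.
  intros Hstep H0k i j Hi Hj.
  assert (Hchain : forall i j, i <= j -> j <= k -> taus L (t i) (t j))
    by (apply clos_refl_trans_chain; assumption).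
  assert (Hpath0i : taus L (t 0) (t i)) by (apply Hchain; lia).
  assert (Hpathik : taus L (t i) (t k)) by (apply Hchain; lia).
  assert (Hbisi0 : bisim_ed L x y (t i) (t 0)).
  { apply bisim_ed_sym, bisim_ed_stutter with (t 0) (t k); auto using bisim_ed_refl. }
  assert (Hbisik : bisim_ed L x y (t i) (t k)).
  { apply bisim_ed_sym, bisim_ed_stutter with (t 0) (t k); auto using bisim_ed_refl, bisim_ed_sym. }
  apply bisim_ed_stutter with (t 0) (t k); [assumption | assumption | apply Hchain; lia ..].
Qed.
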